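(* Let $n\ge r\ge1$, let $\mathcal{O}\subset\mathbb{R}^{n\times r}$ be an open set containing ${\rm St}(n,r)$, let $f:\mathcal{O}\to\mathbb{R}$ be continuously differentiable, and let $L_f$ be a Lipschitz constant of $f$ on ${\rm St}(n,r)$. Consider problem (P): $\min_{X\in\mathcal{S}_{+}^{n,r}}f(X)$, and suppose that, in the case $n>r>1$, each local minimizer of (P) has no zero rows. Then for every local minimizer $X^*$ of (P): 1. if $n=r$ or $n>r=1$, with $\kappa'>0$ a constant such that ${\rm dist}(Z,\mathcal{S}_{+}^{n,r})\le\kappa'{\rm dist}(Z,\mathbb{R}_{+}^{n\times r})$ for all $Z\in{\rm St}(n,r)$, there exists $\delta>0$ such that $f(X)-f(X^* )+\kappa'L_f\vartheta(X)\ge0$ for all $X\in{\rm St}(n,r)$ with $\|X-X^*\|_F\le\delta$; 2. if $n>r>1$, with $\kappa:=\frac{2.1\sqrt{r}[1+3r(n-r)]}{X^*_{i^*j^*}}$ ($X^*_{i^*j^*}$ the smallest nonzero entry of $X^*$), there exists $\delta>0$ such that for all $\epsilon\ge0$ and all $X\in\mathcal{F}_\epsilon:=\{X\in{\rm St}(n,r):\vartheta(X)=\epsilon\}$ with $\|X-X^*\|_F\le\delta$, $f(X)-f(X^* )+\kappa L_f\vartheta(X)\ge0$. Hence each local minimizer of (P) is a local minimizer of $\min_{X\in{\rm St}(n,r)}\{f(X)+\rho\vartheta(X)\}$ for every $\rho\ge\max(\kappa',\kappa)L_f$, and conversely, for any $\rho>0$, each local minimizer of $\min_{X\in{\rm St}(n,r)}\{f(X)+\rho\vartheta(X)\}$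 that is entrywise nonnegative is a local minimizer of (P).
   Context: ${\rm St}(n,r):=\{X\in\mathbb{R}^{n\times r}: X^\top X=I_r\}$, $\mathbb{R}_{+}^{n\times r}$ the entrywise nonnegative matrices, $\mathcal{S}_{+}^{n,r}:=\mathbb{R}_{+}^{n\times r}\cap{\rm St}(n,r)$, ${\rm dist}$ the Frobenius-norm distance, and $\vartheta(X):=\sum_{i,j}\max(0,-X_{ij})$. *)

From HB Require Import structures.
From mathcomp Require Import all_boot all_order all_algebra.
From mathcomp Require Import all_classical all_reals all_analysis.
Set Implicit Arguments. Unset Strict Implicit. Unset Printing Implicit Defensive.
Import Order.TTheory GRing.Theory Num.Theory.
Import numFieldNormedType.Exports.
Local Open Scope classical_set_scope.
Local Open Scope ring_scope.

Section Defs.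
Context {R : realType} {n r : nat}.
Implicit Types (X Y Z : 'M[R]_(n, r)) (S : set 'M[R]_(n, r)).

Definition frob X : R := Num.sqrt (\sum_(i < n) \sum_(j < r) X i j ^+ 2).

Definition distF Z S : R := inf [set frob (Z - Y) | Y in S].

Definition Stiefel : set 'M[R]_(n, r) := [set X | X^T *m X = 1%:M].

Definition nonneg_mx : set 'M[R]_(n, r) := [set X | forall i j, 0 <= X i j].

Definition Splus : set 'M[R]_(n, r) := nonneg_mx `&` Stiefel.

Definition vartheta X : R := \sum_(i < n) \sum_(j < r) Num.max 0 (- X i j).

Definition min_nz_entry X : R :=
  inf [set x | exists i j, X i j != 0 /\ x = X i j].

Definition no_zero_rows X : Prop := forall i : 'I_n, exists j : 'I_r, X i j != 0.

Definition local_min_on (g : 'M[R]_(n, r) -> R) S X : Prop :=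
  S X /\ exists delta : R, 0 < delta /\
    forall Y, S Y -> frob (Y - X) <= delta -> g X <= g Y.

Definition lipschitz_const_on (f : 'M[R]_(n, r) -> R) S (L : R) : Prop :=
  forall X Y, S X -> S Y -> `|f X - f Y| <= L * frob (X - Y).

(* f is continuously differentiable on O: differentiable at every point of O,
   and every directional derivative X |-> 'D_V f X is continuous on O
   (in finite dimension this is continuity of the differential). *)
Definition C1_on (f : 'M[R]_(n, r) -> R) (O : set 'M[R]_(n, r)) : Prop :=
  (forall X, O X -> differentiable f X) /\
  (forall (V X : 'M[R]_(n, r)), O X -> {for X, continuous ('D_V f)}).

End Defs.

From HB Require Import structures.
From mathcomp Require Import all_boot all_order all_algebra.
From mathcomp Require Import all_classical all_reals all_analysis.
From mathcomp Require Import ring lra.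
Import Order.TTheory GRing.Theory Num.Theory.
Import numFieldNormedType.Exports.
Local Open Scope classical_set_scope.
Local Open Scope ring_scope.

(* Let Xs be a local minimiser of f on S_+ with radius d0.  If every X in
   St(n,r) close to Xs lies within K vartheta(X), up to an arbitrarily small
   slack, of some Y in S_+ that is still within d0 of Xs, then
   f(X) >= f(Y) - L_f ||X - Y|| >= f(Xs) - K L_f vartheta(X).
   In part 1 such a Y is given by the assumed error bound, because
   dist(X, R_+) <= vartheta(X).  In part 2 it is built by hand: nonnegative
   orthonormal columns have disjoint supports, so each row of Xs has exactly
   one nonzero entry (it has no zero rows), and keeping the positive part of X
   on the support of Xs and normalising its columns gives Y in S_+.
   Orthogonality of the columns of X bounds the positive mass of X off that
   support by (4r/m) vartheta(X), m the smallest nonzero entry of Xs, whence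
   ||X - Y|| <= 2 (1 + 4r/m) vartheta(X) <= kappa vartheta(X).
   The converse holds because vartheta vanishes on nonnegative matrices. *)

Section RealFacts.
Context {R : realDomainType}.

Lemma ler_sum_term {I : finType} (F : I -> R) i :
  (forall j, 0 <= F j) -> F i <= \sum_j F j.
Proof. by move=> F_ge0; rewrite (bigD1 i) //= lerDl sumr_ge0. Qed.

Lemma sum_sqr_le_sqr_sum {I : finType} (F : I -> R) :
  (forall i, 0 <= F i) -> \sum_i F i ^+ 2 <= (\sum_i F i) ^+ 2.
Proof.
move=> F_ge0; rewrite [leRHS]expr2 mulr_suml; apply: ler_sum => i _.
by rewrite expr2 ler_wpM2l // ler_sum_term.
Qed.

Lemma sum_offdiag_le k (G : 'I_k -> 'I_k -> R) (c : 'I_k -> R) :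
  (forall j, 0 <= c j) -> (forall j l, j != l -> G j l <= c j + c l) ->
  \sum_j \sum_(l | l != j) G j l <= 2 * k%:R * \sum_j c j.
Proof.
move=> c_ge0 G_le.
have -> : 2 * k%:R * \sum_j c j = \sum_j \sum_l (c j + c l).
  under [RHS]eq_bigr do rewrite big_split /= sumr_const card_ord.
  by rewrite big_split /= sumrMnl sumr_const card_ord; ring.
apply: ler_sum => j _; apply: (@le_trans _ _ (\sum_(l | l != j) (c j + c l))).
  by apply: ler_sum => l lj; rewrite G_le // eq_sym.
rewrite [leRHS](bigID (fun l => l != j)) /= lerDl.
by apply: sumr_ge0 => l _; exact: addr_ge0.
Qed.

Definition pos_part (x : R) : R := Num.max x 0.
Definition neg_part (x : R) : R := Num.max 0 (- x).

Variant pos_neg_part_spec (x : R) : R -> R -> Set :=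
  | PosNegPartGe0 of 0 <= x : pos_neg_part_spec x x 0
  | PosNegPartLt0 of x < 0 : pos_neg_part_spec x 0 (- x).

Lemma pos_neg_partP x : pos_neg_part_spec x (pos_part x) (neg_part x).
Proof.
rewrite /pos_part /neg_part; have [x_ge0|x_lt0] := leP 0 x.
  by rewrite max_l ?oppr_le0 //; constructor.
by rewrite max_r ?oppr_ge0 ?ltW //; constructor.
Qed.

Lemma pos_part_ge0 x : 0 <= pos_part x.
Proof. by case: (pos_neg_partP x). Qed.

Lemma neg_part_ge0 x : 0 <= neg_part x.
Proof. by case: (pos_neg_partP x) => // /ltW; rewrite oppr_ge0. Qed.

Lemma le_pos_part x : x <= pos_part x.
Proof. by case: (pos_neg_partP x) => // /ltW. Qed.

Lemma abs_sub_pos_part x : `|x - pos_part x| = neg_part x.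
Proof.
by case: (pos_neg_partP x) => x0; rewrite ?subrr ?normr0 // subr0 ltr0_norm.
Qed.

Lemma neg_add_pos_part x : neg_part x + pos_part x = `|x|.
Proof.
by case: (pos_neg_partP x) => x0; [rewrite add0r ger0_norm | rewrite addr0 ltr0_norm].
Qed.

Lemma pos_part_mul_le a b : `|a| <= 1 -> `|b| <= 1 ->
  pos_part a * pos_part b <= a * b + neg_part a + neg_part b.
Proof.
rewrite !ler_norml => /andP[? ?] /andP[? ?].
by case: (pos_neg_partP a); case: (pos_neg_partP b) => *; nra.
Qed.

End RealFacts.

Section FrobeniusNorm.
Context {R : realType} {n r : nat}.
Implicit Types (A B X Y : 'M[R]_(n, r)) (S : set 'M[R]_(n, r)).

Definition sqfrob A : R := \sum_(i < n) \sum_(j < r) A i j ^+ 2.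

Lemma sqfrob_ge0 A : 0 <= sqfrob A.
Proof. by do 2![apply: sumr_ge0 => ? _]; exact: sqr_ge0. Qed.

Lemma frob_ge0 A : 0 <= frob A.
Proof. exact: sqrtr_ge0. Qed.

Lemma frob_sqr A : frob A ^+ 2 = sqfrob A.
Proof. by rewrite /frob sqr_sqrtr //; exact: sqfrob_ge0. Qed.

Lemma frob_le A a : 0 <= a -> sqfrob A <= a ^+ 2 -> frob A <= a.
Proof.
by move=> a0 A_le; rewrite /frob -(ger0_norm a0) -sqrtr_sqr ler_sqrt // sqr_ge0.
Qed.

Lemma sqfrob_le A a : frob A <= a -> sqfrob A <= a ^+ 2.
Proof. by move=> A_le; rewrite -frob_sqr !expr2 ler_pM // frob_ge0. Qed.

Lemma sqfrob_exchange A : sqfrob A = \sum_j \sum_i A i j ^+ 2.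
Proof. exact: exchange_big. Qed.

Lemma sqr_entry_le_sqfrob A i j : A i j ^+ 2 <= sqfrob A.
Proof.
have row_le : A i j ^+ 2 <= \sum_j A i j ^+ 2.
  by apply: (ler_sum_term (fun j => A i j ^+ 2)) => k; exact: sqr_ge0.
apply: le_trans row_le (ler_sum_term (fun i => \sum_j A i j ^+ 2) i _) => k.
by apply: sumr_ge0 => l _; exact: sqr_ge0.
Qed.

Lemma abs_entry_le_frob A i j : `|A i j| <= frob A.
Proof. by rewrite -sqrtr_sqr ler_sqrt ?sqfrob_ge0 ?sqr_entry_le_sqfrob. Qed.

Lemma frob_eq0 A : frob A = 0 -> A = 0.
Proof.
move=> A0; apply/matrixP => i j; apply/eqP.
by rewrite mxE -normr_le0 -A0 abs_entry_le_frob.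
Qed.

Lemma ler_frob A B : (forall i j, `|A i j| <= `|B i j|) -> frob A <= frob B.
Proof.
move=> AB; rewrite ler_sqrt ?sqfrob_ge0 //.
apply: ler_sum => i _; apply: ler_sum => j _.
rewrite -[A i j ^+ 2]real_normK ?num_real // -[B i j ^+ 2]real_normK ?num_real //.
by rewrite ler_sqr ?nnegrE.
Qed.

Lemma frob_le_sum_abs A : frob A <= \sum_i \sum_j `|A i j|.
Proof.
apply: frob_le; first by do 2![apply: sumr_ge0 => ? _].
apply: le_trans (sum_sqr_le_sqr_sum _ _) => [|i]; last by apply: sumr_ge0.
apply: ler_sum => i _; apply: le_trans (sum_sqr_le_sqr_sum _ _) => //.
by apply: ler_sum => j _; rewrite real_normK ?num_real.
Qed.

Lemma frob_distC A B : frob (A - B) = frob (B - A).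
Proof.
rewrite /frob; congr Num.sqrt; apply: eq_bigr => i _; apply: eq_bigr => j _.
by rewrite !mxE -sqrrN opprB.
Qed.

Lemma frob_add_le {A B a} : frob A <= a -> frob B <= a -> frob (A + B) <= 2 * a.
Proof.
move=> A_le B_le; have a_ge0 : 0 <= a := le_trans (frob_ge0 A) A_le.
apply: frob_le; first lra.
apply: (@le_trans _ _ (2 * sqfrob A + 2 * sqfrob B)).
  rewrite /sqfrob !mulr_sumr -big_split /=; apply: ler_sum => i _.
  rewrite !mulr_sumr -big_split /=; apply: ler_sum => j _.
  by rewrite mxE; have := sqr_ge0 (A i j - B i j); nra.
by have := sqfrob_le _ _ A_le; have := sqfrob_le _ _ B_le; nra.
Qed.

Lemma has_lbound_distF S X : has_lbound [set frob (X - Y) | Y in S].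
Proof. by exists 0 => _ [Y _ <-]; exact: frob_ge0. Qed.

Lemma distF_le X {S Y} : S Y -> distF X S <= frob (X - Y).
Proof. by move=> SY; apply: (ge_inf (has_lbound_distF S X)); exists Y. Qed.

Lemma distF_approx X {S e} : S !=set0 -> 0 < e ->
  exists2 Y, S Y & frob (X - Y) < distF X S + e.
Proof.
move=> [Y0 SY0] e_gt0.
have S_inf : has_inf [set frob (X - Y) | Y in S].
  by split; [exists (frob (X - Y0)), Y0 | exact: has_lbound_distF].
by have [_ [Y SY <-]] := inf_adherent e_gt0 S_inf; exists Y.
Qed.

Lemma distF_nonneg_mx_le_vartheta X : distF X nonneg_mx <= vartheta X.
Proof.
pose Xp : 'M[R]_(n, r) := \matrix_(i, j) pos_part (X i j).
have Xp_ge0 : nonneg_mx Xp by move=> i j; rewrite mxE pos_part_ge0.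
apply: le_trans (distF_le X Xp_ge0) _; apply: le_trans (frob_le_sum_abs _) _.
apply: ler_sum => i _; apply: ler_sum => j _.
by rewrite !mxE abs_sub_pos_part.
Qed.

Lemma vartheta_ge0 X : 0 <= vartheta X.
Proof. by do 2![apply: sumr_ge0 => ? _]; exact: neg_part_ge0. Qed.

Lemma vartheta_nonneg_mx X : nonneg_mx X -> vartheta X = 0.
Proof. by move=> X_ge0; do 2![apply: big1 => ? _]; rewrite max_l // oppr_le0. Qed.

End FrobeniusNorm.

Section Stiefel.
Context {R : realType} {n r : nat}.
Implicit Types (X Xs : 'M[R]_(n, r)).

Lemma StiefelP X : Stiefel X <-> (forall j k, \sum_i X i j * X i k = (j == k)%:R).
Proof.
have XtXE j k : (X^T *m X) j k = \sum_i X i j * X i k.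
  by rewrite mxE; apply: eq_bigr => i _; rewrite mxE.
split => [/matrixP XtX j k | XtX]; first by rewrite -XtXE XtX mxE.
by apply/matrixP => j k; rewrite XtXE XtX mxE.
Qed.

Lemma StiefelN {X} : Stiefel X -> Stiefel (- X).
Proof. by rewrite /Stiefel /= mulmxN linearN /= mulNmx opprK. Qed.

Lemma Stiefel_abs_le1 X i j : Stiefel X -> `|X i j| <= 1.
Proof.
move=> /StiefelP /(_ j j); rewrite eqxx mulr1n => XX.
have : `|X i j| ^+ 2 <= 1 ^+ 2.
  rewrite real_normK ?num_real // expr1n -XX expr2.
  by apply: (ler_sum_term (fun i => X i j * X i j)) => k; rewrite -expr2 sqr_ge0.
by rewrite ler_sqr ?nnegrE.
Qed.

Lemma Stiefel_col_neq0 {X} j : Stiefel X -> exists i, X i j != 0.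
Proof.
move=> /StiefelP /(_ j j); rewrite eqxx mulr1n => XX.
suff /existsP[i Xij] : [exists i, X i j != 0] by exists i.
apply: contraT; rewrite negb_exists => /forallP X0.
have : \sum_i X i j * X i j = 0.
  by apply: big1 => i _; rewrite (eqP (negbNE (X0 i))) mul0r.
by rewrite XX => /eqP; rewrite oner_eq0.
Qed.

Lemma Splus_row_support {Xs i j k} :
  Splus Xs -> Xs i j != 0 -> Xs i k != 0 -> j = k.
Proof.
move=> [Xs_ge0 /StiefelP XsXs] Xij Xik; apply/eqP; apply: contraT => jk.
have : 0 < Xs i j * Xs i k by rewrite mulr_gt0 // lt_def ?Xij ?Xik Xs_ge0.
have := ler_sum_term (fun i => Xs i j * Xs i k) i
  (fun i => mulr_ge0 (Xs_ge0 i j) (Xs_ge0 i k)).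
by rewrite /= XsXs (negbTE jk) => /le_lt_trans h/h; rewrite ltxx.
Qed.

End Stiefel.

Section ExactPenalty.
Context {R : realType} {n r : nat}.
Implicit Types (X Y Z Xs : 'M[R]_(n, r)).

Lemma lipschitz_const_ge0 {f : 'M[R]_(n, r) -> R} {S L X Y} :
  lipschitz_const_on f S L -> S X -> S Y -> X != Y -> 0 <= L.
Proof.
move=> fL SX SY XY; have d_gt0 : 0 < frob (X - Y).
  rewrite lt_def frob_ge0 andbT; apply: contra XY => /eqP/frob_eq0/eqP.
  by rewrite subr_eq0.
by rewrite -(pmulr_lge0 _ d_gt0); apply: le_trans (fL X Y SX SY).
Qed.

Lemma lipschitz_const_Stiefel_ge0 {f : 'M[R]_(n, r) -> R} {L X} :
  (0 < r)%N -> lipschitz_const_on f Stiefel L -> Stiefel X -> 0 <= L.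
Proof.
move=> r_gt0 fL StX; apply: (lipschitz_const_ge0 fL StX (StiefelN StX)).
pose j0 := Ordinal r_gt0; have [i Xij] := Stiefel_col_neq0 j0 StX.
apply: contra Xij => /eqP/matrixP/(_ i j0); rewrite mxE => XN.
by apply/eqP; lra.
Qed.

Lemma exact_penalty_of_approx {f : 'M[R]_(n, r) -> R} {T L Xs X} {K v : R} :
  lipschitz_const_on f T L -> 0 <= L -> T X ->
  (forall e, 0 < e -> exists2 Y, T Y /\ f Xs <= f Y & frob (X - Y) <= K * v + e) ->
  0 <= f X - f Xs + K * L * v.
Proof.
move=> fL L_ge0 TX approx; apply/ler_addgt0Pr => eps eps_gt0.
have e_gt0 : 0 < eps / (L + 1) by rewrite divr_gt0 //; lra.
have [Y [TY fXs_le] XY_le] := approx _ e_gt0.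
have := fL X Y TX TY; rewrite ler_norml => /andP[fXY _].
have : L * frob (X - Y) <= L * (K * v + eps / (L + 1)) by rewrite ler_wpM2l.
have : L * (eps / (L + 1)) <= eps.
  by rewrite mulrA ler_pdivrMr ?ler_wpM2r; lra.
lra.
Qed.

Lemma local_min_penalized {f : 'M[R]_(n, r) -> R} {Xs} {c rho : R} :
  Splus Xs ->
  (exists delta, 0 < delta /\ forall X, Stiefel X -> frob (X - Xs) <= delta ->
     0 <= f X - f Xs + c * vartheta X) ->
  c <= rho -> local_min_on (fun X => f X + rho * vartheta X) Stiefel Xs.
Proof.
move=> [Xs_ge0 StXs] [delta [delta_gt0 bound]] c_le; split => //.
exists delta; split => // X StX X_near; rewrite vartheta_nonneg_mx // mulr0 addr0.
have := bound X StX X_near; have := vartheta_ge0 X.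
have : c * vartheta X <= rho * vartheta X by rewrite ler_wpM2r ?vartheta_ge0.
lra.
Qed.

Lemma local_min_of_penalized (f : 'M[R]_(n, r) -> R) (rho : R) X :
  local_min_on (fun Y => f Y + rho * vartheta Y) Stiefel X ->
  nonneg_mx X -> local_min_on f Splus X.
Proof.
move=> [StX [delta [delta_gt0 X_min]]] X_ge0; split => //.
exists delta; split => // Y [Y_ge0 StY] Y_near.
by have := X_min Y StY Y_near; rewrite !vartheta_nonneg_mx // !mulr0 !addr0.
Qed.

Lemma exact_penalty_of_error_bound {f : 'M[R]_(n, r) -> R} {L Xs} {kappa : R} :
  (0 < r)%N -> 0 <= kappa -> lipschitz_const_on f Stiefel L ->
  (forall Z, Stiefel Z -> distF Z Splus <= kappa * distF Z nonneg_mx) ->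
  local_min_on f Splus Xs ->
  exists delta, 0 < delta /\ forall X, Stiefel X -> frob (X - Xs) <= delta ->
    0 <= f X - f Xs + kappa * L * vartheta X.
Proof.
move=> r_gt0 kappa_ge0 fL err [SXs [d0 [d0_gt0 Xs_min]]].
have L_ge0 := lipschitz_const_Stiefel_ge0 r_gt0 fL SXs.2.
exists (d0 / 4); split=> [|X StX X_near]; first by rewrite divr_gt0.
apply: (exact_penalty_of_approx fL L_ge0 StX) => e e_gt0.
(* Capping the slack by d0 / 4 keeps the chosen Y within d0 of Xs. *)
set e' := Num.min e (d0 / 4).
have e'_gt0 : 0 < e' by rewrite lt_min e_gt0 divr_gt0.
have [e'_le_e e'_le_d0] : e' <= e /\ e' <= d0 / 4 by rewrite !ge_min !lexx orbT.
have [Y SY XY_lt] := distF_approx X (ex_intro _ Xs SXs) e'_gt0.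
have dist_le_Xs := distF_le X SXs.
have dist_le_vartheta : distF X Splus <= kappa * vartheta X.
  apply: le_trans (err X StX) _.
  by rewrite ler_wpM2l // distF_nonneg_mx_le_vartheta.
exists Y; last lra.
split; [exact: SY.2 | apply: Xs_min => //].
have YX_le : frob (Y - X) <= d0 / 2 by rewrite frob_distC; lra.
have XXs_le : frob (X - Xs) <= d0 / 2 by lra.
have -> : Y - Xs = (Y - X) + (X - Xs) by rewrite addrA subrK.
by apply: le_trans (frob_add_le YX_le XXs_le) _; lra.
Qed.

End ExactPenalty.

Section ColumnNormalization.
Context {R : realType} {n r : nat}.
Implicit Types (A X : 'M[R]_(n, r)).

Definition colnorm A j : R := Num.sqrt (\sum_i A i j ^+ 2).

Definition normalize_cols A : 'M[R]_(n, r) := \matrix_(i, j) (A i j / colnorm A j).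

Lemma colnorm_sqr A j : colnorm A j ^+ 2 = \sum_i A i j ^+ 2.
Proof. by rewrite sqr_sqrtr //; apply: sumr_ge0 => i _; exact: sqr_ge0. Qed.

Lemma colnorm_gt0 A i j : A i j != 0 -> 0 < colnorm A j.
Proof.
move=> Aij; rewrite sqrtr_gt0.
have Aij2 : 0 < A i j ^+ 2 by rewrite lt_def sqrf_eq0 Aij sqr_ge0.
by apply: lt_le_trans Aij2 (ler_sum_term (fun i => A i j ^+ 2) i _) => k; exact: sqr_ge0.
Qed.

Lemma normalize_cols_nonneg A : nonneg_mx A -> nonneg_mx (normalize_cols A).
Proof. by move=> A_ge0 i j; rewrite mxE divr_ge0 ?sqrtr_ge0. Qed.

Lemma normalize_cols_Stiefel A : (forall j, 0 < colnorm A j) ->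
  (forall i j k, j != k -> A i j * A i k = 0) -> Stiefel (normalize_cols A).
Proof.
move=> A_gt0 A_disj; apply/StiefelP => j k; have [<-|jk] := eqVneq j k.
  under eq_bigr do rewrite !mxE -expr2 expr_div_n.
  by rewrite -mulr_suml -colnorm_sqr mulr1n divff // sqrf_eq0 gt_eqF.
rewrite mulr0n; apply: big1 => i _.
by rewrite !mxE mulrACA A_disj // mul0r.
Qed.

Lemma frob_sub_normalize_cols_le X A : Stiefel X ->
  (forall i j, A i j * (X - A) i j = 0) -> (forall j, 0 < colnorm A j) ->
  frob (X - A) <= 1 -> frob (A - normalize_cols A) <= frob (X - A).
Proof.
move=> /StiefelP XX A_orth A_gt0 XA_le1.
set nu := colnorm A; set Z := X - A.
have colZ j : \sum_i Z i j ^+ 2 = 1 - nu j ^+ 2.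
  suff : nu j ^+ 2 + \sum_i Z i j ^+ 2 = 1 by lra.
  have := XX j j; rewrite eqxx mulr1n => <-.
  rewrite colnorm_sqr -big_split /=; apply: eq_bigr => i _.
  have := A_orth i j; rewrite /Z !mxE => orth.
  have -> : X i j * X i j =
    A i j ^+ 2 + (X i j - A i j) ^+ 2 + 2 * (A i j * (X i j - A i j)) by ring.
  by rewrite orth mulr0 addr0.
have nu_ge0 j : 0 <= nu j by exact: sqrtr_ge0.
have nu_le1 j : nu j <= 1.
  have := colZ j; have : 0 <= \sum_i Z i j ^+ 2 by apply: sumr_ge0 => i _; exact: sqr_ge0.
  by have := nu_ge0 j; nra.
have col_diff j : \sum_i (A - normalize_cols A) i j ^+ 2 = (1 - nu j) ^+ 2.
  have nu_neq0 : nu j != 0 by rewrite gt_eqF.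
  transitivity ((\sum_i A i j ^+ 2) * (1 - (nu j)^-1) ^+ 2).
    by rewrite mulr_suml; apply: eq_bigr => i _; rewrite !mxE; ring.
  by rewrite -colnorm_sqr -/nu; field.
have sZ_le1 : sqfrob Z <= 1 by have := sqfrob_le _ _ XA_le1; rewrite expr1n.
(* 1 - nu j <= 1 - nu j ^+ 2 = ||Z_j||^2, and sum_j ||Z_j||^4 <= ||Z||^4 <= ||Z||^2. *)
apply: frob_le (frob_ge0 _) _; rewrite frob_sqr sqfrob_exchange.
under eq_bigr do rewrite col_diff.
apply: (@le_trans _ _ (\sum_j (\sum_i Z i j ^+ 2) ^+ 2)).
  apply: ler_sum => j _; rewrite colZ.
  by have nu0 := nu_ge0 j; have nu1 := nu_le1 j; rewrite ler_sqr ?nnegrE; nra.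
apply: le_trans (sum_sqr_le_sqr_sum _ _) _ => [j|].
  by apply: sumr_ge0 => i _; exact: sqr_ge0.
by rewrite -sqfrob_exchange; have := sqfrob_ge0 Z; nra.
Qed.

End ColumnNormalization.

Section Rounding.
Context {R : realType} {n r : nat}.
Implicit Types (X Xs : 'M[R]_(n, r)).

Definition pos_part_on Xs X : 'M[R]_(n, r) :=
  \matrix_(i, j) (if Xs i j == 0 then 0 else pos_part (X i j)).

Lemma pos_part_on_ge0 Xs X : nonneg_mx (pos_part_on Xs X).
Proof. by move=> i j; rewrite mxE; case: ifP => // _; exact: pos_part_ge0. Qed.

Lemma pos_part_on_orth Xs X i j :
  pos_part_on Xs X i j * (X - pos_part_on Xs X) i j = 0.
Proof.
rewrite !mxE; case: (eqVneq (Xs i j) 0) => _ /=; first by rewrite mul0r.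
by case: (pos_neg_partP (X i j)) => _; rewrite ?subrr ?mulr0 ?mul0r.
Qed.

Lemma abs_sub_pos_part_on Xs X i j : `|(X - pos_part_on Xs X) i j| =
  neg_part (X i j) + (if Xs i j == 0 then pos_part (X i j) else 0).
Proof.
rewrite !mxE; case: (eqVneq (Xs i j) 0) => _ /=; last first.
  by rewrite abs_sub_pos_part addr0.
by rewrite subr0 neg_add_pos_part.
Qed.

Lemma abs_sub_pos_part_on_le Xs X : nonneg_mx Xs ->
  forall i j, `|(X - pos_part_on Xs X) i j| <= `|(X - Xs) i j|.
Proof.
move=> Xs_ge0 i j; rewrite abs_sub_pos_part_on !mxE.
case: (eqVneq (Xs i j) 0) => [-> | _] /=.
  by rewrite subr0 neg_add_pos_part.
rewrite addr0; case: (pos_neg_partP (X i j)) => x0; first exact: normr_ge0.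
by rewrite ler_normr; apply/orP; right; have := Xs_ge0 i j; lra.
Qed.

Lemma sum_pos_part_mul_le X j k : Stiefel X -> j != k ->
  \sum_i pos_part (X i j) * pos_part (X i k) <=
  \sum_i (neg_part (X i j) + neg_part (X i k)).
Proof.
move=> StX jk; have /StiefelP XX := StX.
apply: (@le_trans _ _ (\sum_i X i j * X i k +
                       \sum_i (neg_part (X i j) + neg_part (X i k)))).
  rewrite -big_split /=; apply: ler_sum => i _; rewrite addrA.
  by apply: pos_part_mul_le; exact: Stiefel_abs_le1.
by rewrite XX (negbTE jk) mulr0n add0r.
Qed.

Lemma sum_pos_part_le_vartheta X (P : 'I_n -> 'I_r -> bool) (m : R) :
  Stiefel X -> 0 < m -> (forall i j, P i j -> exists2 k, k != j & m <= X i k) ->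
  \sum_i \sum_j (if P i j then pos_part (X i j) else 0) <= 2 * r%:R / m * vartheta X.
Proof.
move=> StX m_gt0 P_large.
pose c j := \sum_i neg_part (X i j).
have c_ge0 j : 0 <= c j by apply: sumr_ge0 => i _; exact: neg_part_ge0.
(* A counted entry shares its row with an entry >= m, so it is at most S i j / m. *)
pose S i j := \sum_(k | k != j) pos_part (X i j) * pos_part (X i k).
have entry_le i j : (if P i j then pos_part (X i j) else 0) <= S i j / m.
  have S_ge0 : 0 <= S i j by apply: sumr_ge0 => k _; rewrite mulr_ge0 ?pos_part_ge0.
  case: ifP => [Pij|_]; last exact: divr_ge0 S_ge0 (ltW m_gt0).
  have [k kj Xik] := P_large i j Pij; rewrite ler_pdivlMr //.
  apply: le_trans (_ : pos_part (X i j) * pos_part (X i k) <= S i j).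
    by rewrite ler_wpM2l ?pos_part_ge0 // (le_trans Xik) ?le_pos_part.
  by rewrite /S (bigD1 k) //= lerDl sumr_ge0 // => l _; rewrite mulr_ge0 ?pos_part_ge0.
have S_le : \sum_i \sum_j S i j <= 2 * r%:R * vartheta X.
  have -> : \sum_i \sum_j S i j =
      \sum_j \sum_(k | k != j) \sum_i pos_part (X i j) * pos_part (X i k).
    by rewrite exchange_big; apply: eq_bigr => j _; exact: exchange_big.
  have -> : vartheta X = \sum_j c j by rewrite /vartheta exchange_big.
  apply: sum_offdiag_le c_ge0 _ => j k jk; rewrite /c -big_split /=.
  exact: sum_pos_part_mul_le.
apply: (@le_trans _ _ ((\sum_i \sum_j S i j) / m)).
  rewrite mulr_suml; apply: ler_sum => i _; rewrite mulr_suml.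
  by apply: ler_sum => j _; exact: entry_le.
have m_inv_ge0 : 0 <= m^-1 by rewrite invr_ge0 ltW.
by rewrite [leRHS]mulrAC; apply: (ler_wpM2r m_inv_ge0).
Qed.

Lemma frob_sub_pos_part_on_le Xs X (m : R) :
  Stiefel X -> no_zero_rows Xs -> 0 < m -> (forall i j, Xs i j != 0 -> m <= X i j) ->
  frob (X - pos_part_on Xs X) <= (1 + 2 * r%:R / m) * vartheta X.
Proof.
move=> StX Xs_rows m_gt0 X_large; apply: le_trans (frob_le_sum_abs _) _.
have -> : \sum_i \sum_j `|(X - pos_part_on Xs X) i j| = vartheta X +
    \sum_i \sum_j (if Xs i j == 0 then pos_part (X i j) else 0).
  rewrite /vartheta -big_split; apply: eq_bigr => i _.
  by rewrite -big_split; apply: eq_bigr => j _; exact: abs_sub_pos_part_on.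
rewrite mulrDl mul1r lerD2l; apply: sum_pos_part_le_vartheta => // i j /eqP Xs0.
have [k Xsk] := Xs_rows i; exists k; last exact: X_large.
by apply: contraNneq Xsk => ->; apply/eqP.
Qed.

Lemma Splus_rounding {Xs X} {m d : R} :
  Splus Xs -> no_zero_rows Xs -> 0 < m -> (forall i j, Xs i j != 0 -> m <= Xs i j) ->
  Stiefel X -> frob (X - Xs) <= d -> d <= m / 4 -> d <= 1 / 2 ->
  exists Y, [/\ Splus Y, frob (X - Y) <= 2 * (1 + 4 * r%:R / m) * vartheta X
              & frob (Y - Xs) <= 4 * d].
Proof.
move=> [Xs_ge0 StXs] Xs_rows m_gt0 Xs_ge_m StX X_near d_m d_1.
set U := pos_part_on Xs X; set Y := normalize_cols U.
have X_large i j : Xs i j != 0 -> m / 2 <= X i j.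
  move=> nz; have := le_trans (abs_entry_le_frob (X - Xs) i j) X_near.
  by rewrite !mxE ler_norml => /andP[? ?]; have := Xs_ge_m i j nz; lra.
have U_col_gt0 j : 0 < colnorm U j.
  have [i nz] := Stiefel_col_neq0 j StXs; apply: (colnorm_gt0 _ i).
  rewrite /U mxE (negbTE nz) gt_eqF //.
  by apply: lt_le_trans (le_pos_part _); apply: lt_le_trans (X_large i j nz); lra.
have U_disj i j k : j != k -> U i j * U i k = 0.
  move=> jk; rewrite /U !mxE.
  have [//|nzj] := eqVneq (Xs i j) 0; first by rewrite mul0r.
  have [//|nzk] := eqVneq (Xs i k) 0; first by rewrite mulr0.
  by move: jk; rewrite (Splus_row_support (conj Xs_ge0 StXs) nzj nzk) eqxx.
have XU_le : frob (X - U) <= d.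
  exact: le_trans (ler_frob _ _ (abs_sub_pos_part_on_le Xs X Xs_ge0)) X_near.
have XU_vartheta : frob (X - U) <= (1 + 4 * r%:R / m) * vartheta X.
  have -> : 4 * r%:R / m = 2 * r%:R / (m / 2) by field; rewrite gt_eqF.
  by apply: frob_sub_pos_part_on_le => //; rewrite divr_gt0.
have XY_le : frob (X - Y) <= 2 * frob (X - U).
  have -> : X - Y = (X - U) + (U - Y) by rewrite addrA subrK.
  apply: frob_add_le => //; apply: frob_sub_normalize_cols_le => //; last lra.
  exact: pos_part_on_orth.
exists Y; split.
- split; last exact: normalize_cols_Stiefel.
  by apply: normalize_cols_nonneg; exact: pos_part_on_ge0.
- by apply: le_trans XY_le _; rewrite -mulrA ler_wpM2l.
have -> : Y - Xs = (Y - X) + (X - Xs) by rewrite addrA subrK.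
have -> : 4 * d = 2 * (2 * d) by ring.
apply: frob_add_le; last by have := frob_ge0 (X - Xs); lra.
by rewrite frob_distC; apply: le_trans XY_le _; lra.
Qed.

Lemma min_nz_entry_le {Xs i j} :
  nonneg_mx Xs -> Xs i j != 0 -> min_nz_entry Xs <= Xs i j.
Proof.
move=> Xs_ge0 nz.
have lb : has_lbound [set x | exists i j, Xs i j != 0 /\ x = Xs i j].
  by exists 0 => _ [k [l [_ ->]]]; exact: Xs_ge0.
by apply: (ge_inf lb); exists i, j.
Qed.

Lemma min_nz_entry_Splus {Xs} : (0 < r)%N -> Splus Xs -> 0 < min_nz_entry Xs <= 1.
Proof.
move=> r_gt0 [Xs_ge0 StXs]; pose j0 := Ordinal r_gt0.
have [i0 nz0] := Stiefel_col_neq0 j0 StXs.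
apply/andP; split; last first.
  apply: le_trans (min_nz_entry_le Xs_ge0 nz0) _.
  by apply: le_trans (ler_norm _) _; exact: Stiefel_abs_le1.
pose m0 := \big[Order.min/1]_(p : 'I_n * 'I_r | Xs p.1 p.2 != 0) Xs p.1 p.2.
apply: (@lt_le_trans _ _ m0).
  apply: (big_ind (fun x => 0 < x)) => // [x y x0 y0 | p nz_p].
    by rewrite lt_min x0 y0.
  by rewrite lt_def nz_p Xs_ge0.
apply: lb_le_inf; first by exists (Xs i0 j0), i0, j0.
move=> _ [i [j [nz ->]]].
exact: (@bigmin_le_cond _ _ _ 1 (i, j) (fun p : 'I_n * 'I_r => Xs p.1 p.2 != 0)
          (fun p => Xs p.1 p.2) nz).
Qed.

(* Crude: only sqrt r >= 7/5 and n - r >= 1 are used. *)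
Lemma rounding_const_le_kappa {m : R} : 0 < m -> m <= 1 -> (1 < r)%N -> (r < n)%N ->
  2 * (1 + 4 * r%:R / m) <=
  21%:R / 10%:R * Num.sqrt r%:R * (1 + 3%:R * r%:R * (n - r)%:R) / m.
Proof.
move=> m_gt0 m_le1 r_gt1 r_lt_n.
have r_ge2 : 2 <= r%:R :> R by rewrite (ler_nat R 2 r).
have nr_ge1 : 1 <= (n - r)%:R :> R by rewrite (ler_nat R 1) subn_gt0.
have sqrt_r : 7 / 5 <= Num.sqrt r%:R :> R.
  have : Num.sqrt ((7 / 5) ^+ 2) <= Num.sqrt r%:R :> R by rewrite ler_sqrt; lra.
  by rewrite sqrtr_sqr ger0_norm //; lra.
set s := Num.sqrt _ in sqrt_r *; set p := 1 + 3%:R * r%:R * (n - r)%:R.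
have p_ge : 1 + 3 * r%:R <= p by rewrite /p; nra.
have : 0 <= (s - 7 / 5) * p by rewrite mulr_ge0 //; lra.
have m_neq0 : m != 0 by rewrite gt_eqF.
rewrite ler_pdivlMr //.
have -> : 2 * (1 + 4 * r%:R / m) * m = 2 * m + 8 * r%:R by field.
lra.
Qed.

Lemma exact_penalty_no_zero_rows {f : 'M[R]_(n, r) -> R} {L Xs} {K : R} :
  (0 < r)%N -> lipschitz_const_on f Stiefel L -> local_min_on f Splus Xs ->
  no_zero_rows Xs -> 2 * (1 + 4 * r%:R / min_nz_entry Xs) <= K ->
  exists delta, 0 < delta /\ forall X, Stiefel X -> frob (X - Xs) <= delta ->
    0 <= f X - f Xs + K * L * vartheta X.
Proof.
move=> r_gt0 fL [SXs [d0 [d0_gt0 Xs_min]]] Xs_rows K_ge.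
have /andP[m_gt0 _] := min_nz_entry_Splus r_gt0 SXs.
have L_ge0 := lipschitz_const_Stiefel_ge0 r_gt0 fL SXs.2.
set m := min_nz_entry Xs in m_gt0 K_ge.
set delta := Num.min (d0 / 4) (Num.min (m / 4) (1 / 2)).
have [delta_d0 delta_m delta_1] : [/\ delta <= d0 / 4, delta <= m / 4 & delta <= 1 / 2].
  by split; rewrite /delta !ge_min lexx ?orbT.
exists delta; split=> [|X StX X_near]; first by rewrite !lt_min !divr_gt0.
have [Y [SY XY_le YXs_le]] := Splus_rounding SXs Xs_rows m_gt0
  (fun i j => min_nz_entry_le SXs.1) StX X_near delta_m delta_1.
apply: (exact_penalty_of_approx fL L_ge0 StX) => e e_gt0; exists Y.
  by split; [exact: SY.2 | apply: Xs_min => //; lra].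
have : 2 * (1 + 4 * r%:R / m) * vartheta X <= K * vartheta X.
  by apply: ler_wpM2r => //; exact: vartheta_ge0.
lra.
Qed.

End Rounding.

Theorem corollary3p7 (R : realType) (n r : nat)
  (O : set 'M[R]_(n, r)) (f : 'M[R]_(n, r) -> R) (Lf : R) :
  (1 <= r)%N -> (r <= n)%N ->
  open O -> Stiefel `<=` O ->
  C1_on f O ->
  lipschitz_const_on f Stiefel Lf ->
  ((1 < r)%N -> (r < n)%N ->
     forall X, local_min_on f Splus X -> no_zero_rows X) ->
  (* part 1: n = r or n > r = 1 *)
  ((n = r \/ ((r < n)%N /\ r = 1%N)) ->
     forall kappa' : R, 0 < kappa' ->
     (forall Z : 'M[R]_(n, r), Stiefel Z -> distF Z Splus <= kappa' * distF Z nonneg_mx) ->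
     forall Xs, local_min_on f Splus Xs ->
       (exists delta : R, 0 < delta /\
          forall X, Stiefel X -> frob (X - Xs) <= delta ->
            0 <= f X - f Xs + kappa' * Lf * vartheta X)
       /\ (forall rho : R, kappa' * Lf <= rho ->
            local_min_on (fun X => f X + rho * vartheta X) Stiefel Xs)) /\
  (* part 2: n > r > 1 *)
  ((1 < r)%N -> (r < n)%N ->
     forall Xs, local_min_on f Splus Xs ->
     let kappa : R := (21%:R / 10%:R) * Num.sqrt r%:R
                        * (1 + 3%:R * r%:R * (n - r)%:R) / min_nz_entry Xs in
       (exists delta : R, 0 < delta /\
          forall eps : R, 0 <= eps ->
          forall X, Stiefel X -> vartheta X = eps -> frob (X - Xs) <= delta ->
            0 <= f X - f Xs + kappa * Lf * vartheta X)
       /\ (forall rho : R, kappa * Lf <= rho ->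
            local_min_on (fun X => f X + rho * vartheta X) Stiefel Xs)) /\
  (* converse *)
  (forall rho : R, 0 < rho ->
     forall X, local_min_on (fun Y => f Y + rho * vartheta Y) Stiefel X ->
       nonneg_mx X -> local_min_on f Splus X).
Proof.
(* Neither the smoothness of f on O nor the case split of part 1 is needed. *)
move=> r_gt0 _ _ _ _ fL rows_nz; split; [|split].
- move=> _ kappa' kappa'_gt0 err Xs Xs_min.
  have bound := exact_penalty_of_error_bound r_gt0 (ltW kappa'_gt0) fL err Xs_min.
  by split=> // rho; exact: local_min_penalized Xs_min.1 bound.
- move=> r_gt1 r_lt_n Xs Xs_min kappa.
  have /andP[m_gt0 m_le1] := min_nz_entry_Splus r_gt0 Xs_min.1.
  have K_ge := rounding_const_le_kappa m_gt0 m_le1 r_gt1 r_lt_n.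
  have [delta [delta_gt0 bound]] :=
    exact_penalty_no_zero_rows r_gt0 fL Xs_min (rows_nz r_gt1 r_lt_n Xs Xs_min) K_ge.
  split; first by exists delta; split=> // eps _ X StX _; exact: bound.
  by move=> rho; apply: local_min_penalized Xs_min.1 _; exists delta.
- by move=> rho _ X; exact: local_min_of_penalized.
Qed.
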